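(* Let $G$ be a tree with negative definite intersection matrix, $\mathcal N$ its set of nodes (vertices of degree $\ge 3$), and $x$ the Laufer operator with respect to $\mathcal N$. Let $n\in\mathcal N$ and let $v_1,\dots,v_s$ ($s\ge1$) be a chain of non-node vertices with $v_1$ adjacent to $n$, $v_j$ adjacent to $v_{j+1}$, of one of two types: (a) a bamboo: each $v_j$ has degree $2$ and $v_s$ is adjacent to a node $n'\neq n$; or (b) a leg: $v_s$ has degree $1$ and $v_1,\dots,v_{s-1}$ have degree $2$. Assume $b_{v_j}\ge2$ for all $j$, except that in case (b) with $s=1$ also $b_{v_1}=1$ is allowed. Let $\alpha$ be the determinant of the negative of the intersection matrix of $\{v_1,\dots,v_s\}$ and $\beta$ that of $\{v_2,\dots,v_s\}$ (with $\beta=1$ if $s=1$), so $\alpha/\beta=[b_{v_1},\dots,b_{v_s}]$. If $Z\in L$ satisfies $x(Z)=Z$, then $$m_{v_1}(Z)=\left\lceil\frac{\beta\,m_n(Z)+m_{n'}(Z)}{\alpha}\right\rceil,$$ where in case (b) one sets $m_{n'}(Z)=0$.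
   Context: $L=\bigoplus_v\mathbb ZE_v$ with $(E_v,E_w)$ = number of edges for $v\ne w$ and $(E_v,E_v)=-b_v$; $m_v(Z)$ is the coefficient of $E_v$ in $Z$. The Laufer operator $x(Z)$ is the unique coefficientwise-minimal $Z''\in L$ with $m_n(Z'')=m_n(Z)$ for all nodes $n$ and $(Z'',E_v)\le0$ for all non-node vertices $v$. $[b_1,\dots,b_s]=b_1-1/(b_2-1/(\cdots-1/b_s))$ is the negative continued fraction. *)

From HB Require Import structures.
From mathcomp Require Import all_boot all_order all_algebra.
Set Implicit Arguments. Unset Strict Implicit. Unset Printing Implicit Defensive.
Import Order.TTheory GRing.Theory Num.Theory.
Local Open Scope ring_scope.

(* A plumbing graph: a finite simple graph on the vertex type V given by a
   symmetric irreflexive adjacency relation e, with Euler numbers b : V -> int.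
   The lattice L = \bigoplus_v Z E_v is represented by functions V -> int,
   m_v(Z) = Z v. *)

Definition simple_graph (V : finType) (e : rel V) : Prop :=
  symmetric e /\ irreflexive e.

(* a tree: connected with #|V| - 1 (unordered) edges *)
Definition is_tree (V : finType) (e : rel V) : Prop :=
  simple_graph e /\ (forall u w : V, connect e u w) /\
  #|[set p : V * V | e p.1 p.2]| = (2 * (#|V| - 1))%N.

Definition deg (V : finType) (e : rel V) (v : V) : nat := #|[set w | e v w]|.

Definition is_node (V : finType) (e : rel V) (v : V) : bool := (3 <= deg e v)%N.

Definition imat (V : finType) (e : rel V) (b : V -> int) (v w : V) : int :=
  if v == w then - b v else (e v w)%:R.

Definition iform (V : finType) (e : rel V) (b : V -> int) (Z Z' : V -> int) : int :=
  \sum_(v : V) \sum_(w : V) Z v * Z' w * imat e b v w.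

Definition iformE (V : finType) (e : rel V) (b : V -> int) (Z : V -> int) (v : V) : int :=
  \sum_(w : V) Z w * imat e b w v.

Definition neg_definite (V : finType) (e : rel V) (b : V -> int) : Prop :=
  forall Z : V -> int, (exists v, Z v != 0) -> iform e b Z Z < 0.

Definition laufer_admissible (V : finType) (e : rel V) (b : V -> int)
    (Z Z'' : V -> int) : Prop :=
  (forall n, is_node e n -> Z'' n = Z n) /\
  (forall v, ~~ is_node e v -> iformE e b Z'' v <= 0).

Definition is_laufer (V : finType) (e : rel V) (b : V -> int) (Z Z'' : V -> int) : Prop :=
  laufer_admissible e b Z Z'' /\
  (forall Z', laufer_admissible e b Z Z' -> forall v, Z'' v <= Z' v).

Definition chain_det (V : finType) (e : rel V) (b : V -> int) (s : nat) (v : nat -> V) : int :=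
  \det (\matrix_(i < s, j < s) (- imat e b (v i) (v j))).

(* The chain v_1, ..., v_s is represented 0-indexed as v 0, ..., v (s-1).
   n' = Some n'' : case (a), a bamboo from n to the node n'';
   n' = None     : case (b), a leg. *)
Definition chain_hyp (V : finType) (e : rel V) (b : V -> int) (n : V) (n' : option V)
    (s : nat) (v : nat -> V) : Prop :=
  [/\ (0 < s)%N, {in [pred j | (j < s)%N] &, injective v},
      e n (v 0%N),
      (forall j, (j.+1 < s)%N -> e (v j) (v j.+1)) &
      match n' with
      | Some n'' =>
          [/\ forall j, (j < s)%N -> deg e (v j) = 2%N,
              e (v s.-1) n'', is_node e n'', n'' != n &
              forall j, (j < s)%N -> 2 <= b (v j)]
      | None =>
          [/\ forall j, (j.+1 < s)%N -> deg e (v j) = 2%N,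
              deg e (v s.-1) = 1%N &
              forall j, (j < s)%N -> (2 <= b (v j)) || ((s == 1%N) && (b (v j) == 1))]
      end].

(* Along the chain, the Laufer conditions (Z, E_{v_j}) <= 0 read
   y_{j-1} + y_{j+1} <= b_{v_j} y_j  for y_0 = m_n(Z), y_j = m_{v_j}(Z), y_{s+1} = m_{n'}(Z).
   Eliminating y_{s}, ..., y_2 with the continuant recursion gives
   beta y_0 + y_{s+1} <= alpha y_1, i.e. m_{v_1}(Z) is at least the ceiling.  Conversely the
   inequalities can be solved greedily with y_1 equal to the ceiling; writing these values
   into Z along the chain keeps all Laufer conditions, because the chain meets the rest of
   the graph only in the nodes n, n'.  Minimality of x(Z) = Z gives the reverse inequality. *)

From HB Require Import structures.
From mathcomp Require Import all_boot all_order all_algebra.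
From mathcomp Require Import zify ring.
Set Implicit Arguments. Unset Strict Implicit. Unset Printing Implicit Defensive.
Import Order.TTheory GRing.Theory Num.Theory.
Local Open Scope ring_scope.

(* [bs 0, ..., bs (s-1)] = continuant s bs / continuant s.-1 (fun j => bs j.+1). *)
Fixpoint continuant (s : nat) (bs : nat -> int) : int :=
  match s with
  | 0%N => 1
  | 1%N => bs 0%N
  | (s'.+1 as s1).+1 => bs 0%N * continuant s1 (fun j => bs j.+1) - continuant s' (fun j => bs j.+2)
  end.

Lemma continuantSS s bs :
  continuant s.+2 bs =
  bs 0%N * continuant s.+1 (fun j => bs j.+1) - continuant s (fun j => bs j.+2).
Proof. by []. Qed.

Definition tridiag (s : nat) (bs : nat -> int) : 'M[int]_s :=
  \matrix_(i < s, j < s) (if i == j :> nat then bs i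
     else if (i.+1 == j)%N || (j.+1 == i)%N then -1 else 0).

Lemma det_tridiag s bs : \det (tridiag s bs) = continuant s bs.
Proof.
elim/ltn_ind: s bs => -[|[|s]] IH bs; first exact: det_mx00.
  by rewrite det_mx11 mxE.
rewrite continuantSS -!IH // (expand_det_row _ ord0) 2!big_ord_recl big1 ?addr0; last first.
  by move=> i _; rewrite mxE mul0r.
rewrite /cofactor !mxE /= expr0 mul1r.
have -> : row' ord0 (col' ord0 (tridiag s.+2 bs)) = tridiag s.+1 (fun j => bs j.+1).
  by apply/matrixP => i j; rewrite !mxE.
set B := row' ord0 (col' (lift ord0 ord0) _).
rewrite (expand_det_col B ord0) big_ord_recl big1 ?addr0; last first.
  by move=> i _; rewrite !mxE mul0r.
rewrite /cofactor !mxE /= expr0 mul1r.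
have -> : row' ord0 (col' ord0 B) = tridiag s (fun j => bs j.+2).
  by apply/matrixP => i j; rewrite !mxE.
by rewrite expr1; ring.
Qed.

Lemma continuant_tail_gt0_lt s (bs : nat -> int) : (forall j, (j <= s)%N -> 2 <= bs j) ->
  0 < continuant s (fun j => bs j.+1) < continuant s.+1 bs.
Proof.
elim: s bs => [|s IH] bs bs_ge2; first by have := bs_ge2 0%N isT; rewrite /=; lia.
have /andP[B_gt0 B_lt_A] := IH _ (fun j (hj : (j <= s)%N) => bs_ge2 j.+1 hj).
have A_le : 2 * continuant s.+1 (fun j => bs j.+1) <= bs 0%N * continuant s.+1 (fun j => bs j.+1).
  by rewrite ler_wpM2r ?bs_ge2 //; lia.
rewrite continuantSS; lia.
Qed.

Lemma continuant_gt0 s (bs : nat -> int) :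
  (forall j, (j < s)%N -> 2 <= bs j) -> 0 < continuant s bs.
Proof.
case: s => [//|s] bs_ge2.
by have /andP[+ ?] := continuant_tail_gt0_lt bs_ge2; lia.
Qed.

Lemma continuant_head_gt0 s (bs : nat -> int) :
  0 < bs 0%N -> (forall j, (j < s)%N -> 2 <= bs j.+1) -> 0 < continuant s.+1 bs.
Proof.
case: s => [//|s] b0_gt0 bs_ge2.
have /andP[B_gt0 B_lt_A] := continuant_tail_gt0_lt (s := s) (bs := fun j => bs j.+1) bs_ge2.
have : continuant s.+1 (fun j => bs j.+1) <= bs 0%N * continuant s.+1 (fun j => bs j.+1).
  by rewrite ler_peMl //; lia.
rewrite continuantSS; lia.
Qed.

Lemma ceil_frac_le (m d k : int) : 0 < d ->
  (Num.ceil (m%:~R / d%:~R : rat) <= k) = (m <= k * d).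
Proof. by move=> d_gt0; rewrite ceil_le_int ler_pdivrMr ?ltr0z // -intrM ler_int. Qed.

Lemma ceil_frac_ge (m d : int) : 0 < d -> m <= Num.ceil (m%:~R / d%:~R : rat) * d.
Proof. by move=> d_gt0; rewrite -ceil_frac_le. Qed.

(* The inequalities (W, E_{v_j}) <= 0 along a chain, with y the coefficients of W on it. *)
Definition chain_ineqs (s : nat) (bs y : nat -> int) : Prop :=
  forall j, (j < s)%N -> y j + y j.+2 <= bs j * y j.+1.

Lemma chain_ineqs_lower s (bs y : nat -> int) :
  (forall j, (j < s)%N -> 2 <= bs j.+1) -> chain_ineqs s.+1 bs y ->
  continuant s (fun j => bs j.+1) * y 0%N + y s.+2 <= continuant s.+1 bs * y 1%N.
Proof.
elim: s bs y => [|s IH] bs y bs_ge2 ineqs; first by have := ineqs 0%N isT; rewrite mul1r.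
have := IH (fun j => bs j.+1) (fun j => y j.+1)
  (fun j (hj : (j < s)%N) => bs_ge2 j.+1 hj) (fun j (hj : (j < s.+1)%N) => ineqs j.+1 hj).
have A_gt0 := continuant_gt0 bs_ge2.
have := ler_wpM2l (ltW A_gt0) (ineqs 0%N isT).
rewrite continuantSS; nia.
Qed.

(* Greedily: y 1 is the ceiling, and the rest comes from the shorter chain started at y 1. *)
Lemma chain_ineqs_sharp s (bs : nat -> int) (a c : int) :
  0 < bs 0%N -> (forall j, (j < s)%N -> 2 <= bs j.+1) ->
  exists y : nat -> int, [/\ chain_ineqs s.+1 bs y, y 0%N = a, y s.+2 = c &
    y 1%N = Num.ceil ((continuant s (fun j => bs j.+1) * a + c)%:~R /
                      (continuant s.+1 bs)%:~R : rat)].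
Proof.
elim: s bs a c => [|s IH] bs a c b0_gt0 bs_ge2.
  set x := Num.ceil _.
  exists (fun k => if k is 0%N then a else if k is 1%N then x else c); split => //.
  move=> [|//] _ /=; have := ceil_frac_ge (continuant 0 (fun j => bs j.+1) * a + c) b0_gt0.
  by rewrite /x mul1r mulrC.
have tail_gt0 : 0 < bs 1%N by have := bs_ge2 0%N isT; lia.
have A'_gt0 := continuant_gt0 bs_ge2.
have A_gt0 := continuant_head_gt0 b0_gt0 bs_ge2.
set x := Num.ceil _.
have [y [ineqs y0 ylast y1]] := IH (fun j => bs j.+1) x c tail_gt0
  (fun j (hj : (j < s)%N) => bs_ge2 j.+1 hj).
exists (fun k => if k is k'.+1 then y k' else a); split => //.
case=> [_|j hj]; last exact: ineqs j hj.
have x_ge : continuant s.+1 (fun j => bs j.+1) * a + c <= x * continuant s.+2 bs :=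
  ceil_frac_ge _ A_gt0.
rewrite continuantSS in x_ge; rewrite /= y0 y1.
suff : Num.ceil ((continuant s (fun j => bs j.+2) * x + c)%:~R /
         (continuant s.+1 (fun j => bs j.+1))%:~R : rat) <= bs 0%N * x - a by lia.
rewrite ceil_frac_le //; nia.
Qed.

Lemma nbrs_eq_set (V : finType) (e : rel V) (w : V) (A : {set V}) :
  #|A| = deg e w -> A \subset [set u | e w u] -> forall u, e w u = (u \in A).
Proof. by move=> cardA /(subset_cardP cardA) eqA u; rewrite eqA inE. Qed.

Definition ocoef (V : Type) (W : V -> int) (o : option V) : int :=
  if o is Some w then W w else 0.

Lemma sum_Some_eq (V : finType) (W : V -> int) (o : option V) :
  \sum_(u | Some u == o) W u = ocoef W o.
Proof.
case: o => [w|] /=; last by rewrite big_pred0.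
by rewrite (eq_bigl (pred1 w)) ?big_pred1_eq // => u; rewrite /= (inj_eq Some_inj).
Qed.

Lemma sum_Some_eq2 (V : finType) (W : V -> int) (o1 o2 : option V) : o1 != o2 ->
  \sum_(u | (Some u == o1) || (Some u == o2)) W u = ocoef W o1 + ocoef W o2.
Proof.
move=> o12; rewrite (bigID (fun u => Some u == o1)) /= -!sum_Some_eq.
congr (_ + _); apply: eq_bigl => u;
  by case: (eqVneq (Some u) o1) => [->|_] /=; rewrite ?andbT ?andbF ?(negPf o12).
Qed.

Lemma iformE_nbrs (V : finType) (e : rel V) (b : V -> int) (W : V -> int) (w : V) :
  symmetric e -> irreflexive e ->
  iformE e b W w = \sum_(u | e w u) W u - b w * W w.
Proof.
move=> e_sym e_irr; rewrite /iformE (bigD1 w) //= /imat eqxx addrC mulrN mulrC.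
congr (_ - _); rewrite [RHS]big_mkcond [LHS]big_mkcond; apply: eq_bigr => u _.
case: (eqVneq u w) => [->|] /=; first by rewrite e_irr.
by rewrite e_sym; case: (e w u); rewrite ?mulr1 ?mulr0.
Qed.

Section Chain.

Variables (V : finType) (e : rel V) (b : V -> int).
Variables (n : V) (n' : option V) (s : nat) (v : nat -> V).
Hypotheses (e_sym : symmetric e) (e_irr : irreflexive e).
Hypotheses (node_n : is_node e n) (chain : chain_hyp e b n n' s v).

(* Position k of the extended chain n, v 0, ..., v (s-1), n'; positions past s
   give n', which is None for a leg. *)
Definition chain_at (k : nat) : option V :=
  if k is k'.+1 then if (k' < s)%N then Some (v k') else n' else Some n.

Definition chain_coefs (W : V -> int) (k : nat) : int := ocoef W (chain_at k).

Lemma chain_vertex_not_node j : (j < s)%N -> ~~ is_node e (v j).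
Proof.
move=> j_lt_s; rewrite /is_node -ltnNge ltnS.
case: chain => _ _ _ _; case: n' => [n''|] [deg2 deg_last]; first by rewrite deg2.
case: (ltnP j.+1 s) => [/deg2 -> // | ?].
have -> : j = s.-1 by lia.
by rewrite deg_last.
Qed.

Lemma is_node_chain_at k w :
  chain_at k = Some w -> is_node e w = ((k == 0%N) || (s < k)%N).
Proof.
case: k => [/= [<-] // | k /=]; case: ltnP => [k_lt_s [<-] | s_le_k].
  by rewrite (negPf (chain_vertex_not_node k_lt_s)) ltnS leqNgt k_lt_s.
case: chain => _ _ _ _; case: n' => [n''|//] [_ _ node_n'' _ _] [<-].
by rewrite node_n'' ltnS s_le_k.
Qed.

Lemma chain_at_non_node k w : chain_at k = Some w -> ~~ is_node e w ->
  exists2 j, (j < s)%N & k = j.+1 /\ w = v j.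
Proof.
move=> wk; rewrite (is_node_chain_at wk) negb_or -leqNgt => /andP[k_neq0 k_le_s].
case: k k_neq0 k_le_s wk => [//|k] _ k_lt_s; rewrite /= k_lt_s => -[<-].
by exists k.
Qed.

Lemma chain_end_neq : n' != Some n.
Proof.
by case: chain => _ _ _ _; case: n' => [n''|//] [_ _ _ ? _]; rewrite (inj_eq Some_inj).
Qed.

Lemma chain_at_inj i k w : (i <= s.+1)%N -> (k <= s.+1)%N ->
  chain_at i = Some w -> chain_at k = Some w -> i = k.
Proof.
move=> i_le k_le wi wk; case: (boolP (is_node e w)) => [w_node | w_non_node].
  have at_end (l : nat) : (l <= s.+1)%N -> chain_at l = Some w -> l = 0%N \/ l = s.+1.
    by move=> ? /is_node_chain_at; rewrite w_node => /esym /orP[/eqP|]; [left|right; lia].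
  have end_n : chain_at s.+1 = n' by rewrite /= ltnn.
  have := chain_end_neq.
  case: (at_end i i_le wi) (at_end k k_le wk) => [] ? [] ?; subst i k => //.
    by rewrite -end_n wk -wi /= eqxx.
  by rewrite -end_n wi -wk /= eqxx.
have [i' i'_lt [-> wi']] := chain_at_non_node wi w_non_node.
have [k' k'_lt [-> wk']] := chain_at_non_node wk w_non_node.
by case: chain => _ v_inj _ _ _; rewrite (v_inj i' k') // -wi' -wk'.
Qed.

Lemma chain_at_vertex j : (j < s)%N -> chain_at j.+1 = Some (v j).
Proof. by move=> j_lt_s; rewrite /= j_lt_s. Qed.

Lemma chain_at_Some k : (k <= s)%N -> exists w, chain_at k = Some w.
Proof. by case: k => [|k] k_le; [exists n | exists (v k); rewrite chain_at_vertex]. Qed.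

Lemma chain_at_eq i k : (i <= s.+1)%N -> (k <= s)%N ->
  (chain_at k == chain_at i) = (k == i).
Proof.
move=> i_le k_le; have [w wk] := chain_at_Some k_le.
apply/eqP/eqP => [|-> //]; rewrite wk => /esym wi.
by apply: (chain_at_inj (w := w)) => //; apply: leqW.
Qed.

Lemma chain_vertex_eq i j : (i < s)%N -> (j < s)%N -> (v i == v j) = (i == j).
Proof.
by move=> i_lt j_lt; rewrite -(inj_eq Some_inj) -!chain_at_vertex // chain_at_eq ?eqSS // ltnW.
Qed.

Lemma node_not_chain_vertex w : is_node e w -> forall j : 'I_s, v j != w.
Proof.
by move=> w_node j; apply: contraNneq (chain_vertex_not_node (ltn_ord j)) => ->.
Qed.

Lemma chain_end_node w : n' = Some w -> is_node e w.
Proof.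
by move=> n'_w; rewrite (@is_node_chain_at s.+1) /= ?ltnn ?ltnSn ?orbT.
Qed.

Lemma adj_chain_at j k w : (j < s)%N -> (k == j) || (k == j.+2) ->
  chain_at k = Some w -> e (v j) w.
Proof.
case: chain => _ _ e_n_v0 e_path last_n' j_lt_s /orP[] /eqP ->.
  case: j j_lt_s => [_ [<-]|j j_lt_s]; first by rewrite e_sym.
  by rewrite chain_at_vertex ?(ltnW j_lt_s) // => -[<-]; rewrite e_sym e_path.
case: (ltnP j.+1 s) => [j1_lt_s|s_le_j1].
  by rewrite chain_at_vertex // => -[<-]; exact: e_path.
rewrite /= ltnNge s_le_j1; case: n' last_n' => // n'' [_ e_last _ _ _] [<-].
by have -> : j = s.-1 by lia.
Qed.

Lemma deg_chain_vertex j : (j < s)%N -> deg e (v j) = (chain_at j.+2 != None).+1.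
Proof.
case: chain => _ _ _ _ last_n' j_lt_s /=.
case: (ltnP j.+1 s) => [j1_lt_s | s_le_j1].
  by case: n' last_n' => [n''|] [deg2 _]; rewrite deg2.
case: n' last_n' => [n''|] [deg2 deg_last]; first by rewrite deg2.
by have -> : j = s.-1 by lia.
Qed.

Lemma chain_at_neq2 j : (j < s)%N -> chain_at j != chain_at j.+2.
Proof. by move=> j_lt_s; rewrite chain_at_eq ?ltn_eqF // ltnW. Qed.

Lemma chain_nbrs j u : (j < s)%N ->
  e (v j) u = (Some u == chain_at j) || (Some u == chain_at j.+2).
Proof.
move=> j_lt_s; have [l at_j] := chain_at_Some (ltnW j_lt_s).
have l_nbr : e (v j) l by apply: (adj_chain_at j_lt_s _ at_j); rewrite eqxx.
have := chain_at_neq2 j_lt_s; have := deg_chain_vertex j_lt_s.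
rewrite at_j; case at_j2: (chain_at j.+2) => [r|] deg_vj l_neq_r.
  rewrite (@nbrs_eq_set _ _ _ [set l; r]) ?inE ?(inj_eq Some_inj) //.
    by rewrite cards2 deg_vj -(inj_eq Some_inj) l_neq_r.
  apply/subsetP => x; rewrite !inE => /orP[] /eqP -> //.
  by apply: (adj_chain_at j_lt_s _ at_j2); rewrite eqxx orbT.
rewrite orbF (@nbrs_eq_set _ _ _ [set l]) ?inE ?(inj_eq Some_inj) ?cards1 //.
by apply/subsetP => x; rewrite !inE => /eqP ->.
Qed.

Lemma chain_adj i j : (i < s)%N -> (j < s)%N -> e (v i) (v j) = (i.+1 == j) || (j.+1 == i).
Proof.
move=> i_lt j_lt; have i_le : (i <= s.+1)%N by lia.
by rewrite chain_nbrs // -chain_at_vertex // !chain_at_eq // eqSS orbC (eq_sym j).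
Qed.

Lemma chain_det_continuant m k : (m + k <= s)%N ->
  chain_det e b k (fun j => v (m + j)%N) = continuant k (fun j => b (v (m + j)%N)).
Proof.
move=> mk_le; rewrite /chain_det -det_tridiag; congr (\det _); apply/matrixP => i j.
have i_lt : (m + i < s)%N by have := ltn_ord i; lia.
have j_lt : (m + j < s)%N by have := ltn_ord j; lia.
rewrite !mxE /imat chain_vertex_eq // eqn_add2l.
case: eqP => [->|_]; first by rewrite opprK.
by rewrite chain_adj // -!addnS !eqn_add2l; case: (_ || _).
Qed.

Lemma iformE_chain_vertex W j : (j < s)%N ->
  iformE e b W (v j) = chain_coefs W j + chain_coefs W j.+2 - b (v j) * chain_coefs W j.+1.
Proof.
move=> j_lt_s; rewrite iformE_nbrs // (eq_bigl _ _ (fun u => chain_nbrs u j_lt_s)).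
by rewrite sum_Some_eq2 ?chain_at_neq2 // /chain_coefs (chain_at_vertex j_lt_s).
Qed.

Lemma chain_weights :
  [/\ (0 < s)%N, 0 < b (v 0%N) & forall j, (j.+1 < s)%N -> 2 <= b (v j.+1)].
Proof.
case: chain => s_gt0 _ _ _; case: n' => [n''|] [_ _]; last move=> b_cond.
  by move=> _ _ b_ge2; split => // [|j j1_lt]; [have := b_ge2 0%N s_gt0 | exact: b_ge2]; lia.
split => // [|j j1_lt].
  by have /orP[|/andP[_ /eqP ->]] := b_cond 0%N s_gt0 => //; lia.
by have := b_cond j.+1 j1_lt; rewrite gtn_eqF ?orbF //; lia.
Qed.

Lemma admissible_chain_ineqs Z W :
  laufer_admissible e b Z W -> chain_ineqs s (fun j => b (v j)) (chain_coefs W).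
Proof.
move=> [_ W_non_node] j j_lt_s.
by have := W_non_node _ (chain_vertex_not_node j_lt_s); rewrite iformE_chain_vertex //; lia.
Qed.

(* Coefficient of v j becomes y (j + 1), matching the indexing of chain_coefs. *)
Definition chain_replace (W : V -> int) (y : nat -> int) (w : V) : int :=
  if [pick j : 'I_s | v j == w] is Some j then y j.+1 else W w.

Lemma chain_replace_vertex W y j : (j < s)%N -> chain_replace W y (v j) = y j.+1.
Proof.
move=> j_lt_s; rewrite /chain_replace; case: pickP => [i /eqP|/(_ (Ordinal j_lt_s))].
  by move/eqP; rewrite chain_vertex_eq // => /eqP ->.
by rewrite eqxx.
Qed.

Lemma chain_replace_off W y w : (forall j : 'I_s, v j != w) -> chain_replace W y w = W w.
Proof.
by move=> off; rewrite /chain_replace; case: pickP => // j vj_w; have := off j; rewrite vj_w.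
Qed.

Lemma chain_coefs_replace W y k : (k <= s.+1)%N ->
  y 0%N = chain_coefs W 0 -> y s.+1 = chain_coefs W s.+1 ->
  chain_coefs (chain_replace W y) k = y k.
Proof.
case: k => [_ -> | k k_le _ y_end].
  by rewrite /chain_coefs /= chain_replace_off //; apply: node_not_chain_vertex.
case: (ltnP k s) => [k_lt_s | s_le_k].
  by rewrite /chain_coefs chain_at_vertex //= chain_replace_vertex.
have -> : k = s by lia.
rewrite y_end /chain_coefs /= ltnn; case n'_w: n' => [w|//] /=.
by rewrite chain_replace_off //; apply: node_not_chain_vertex; apply: chain_end_node.
Qed.

Lemma admissible_chain_replace Z W y :
  laufer_admissible e b Z W -> chain_ineqs s (fun j => b (v j)) y ->
  y 0%N = chain_coefs W 0 -> y s.+1 = chain_coefs W s.+1 ->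
  laufer_admissible e b Z (chain_replace W y).
Proof.
move=> [W_node W_non_node] ineqs y0 y_end; split.
  by move=> w w_node; rewrite -W_node // chain_replace_off //; apply: node_not_chain_vertex.
move=> w w_non_node.
case: (boolP [exists j : 'I_s, v j == w]) => [/existsP[j /eqP <-] | /existsPn off].
  have j_lt_s := ltn_ord j.
  rewrite iformE_chain_vertex // !chain_coefs_replace //; try lia.
  by have := ineqs j j_lt_s; lia.
(* No neighbour of a non-node off the chain lies on it: the chain only touches n, n'. *)
have nbrs_off u : e w u -> chain_replace W y u = W u.
  move=> wu; apply: chain_replace_off => j; apply/eqP => vj_u.
  move: wu; rewrite -vj_u e_sym chain_nbrs // => /orP[] /eqP /esym at_w;
    have [k k_lt_s [_ w_vk]] := chain_at_non_node at_w w_non_node;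
    by have := off (Ordinal k_lt_s); rewrite w_vk eqxx.
rewrite iformE_nbrs // chain_replace_off // (eq_bigr _ nbrs_off) -iformE_nbrs //.
exact: W_non_node.
Qed.

Lemma laufer_fixed_chain_start Z : is_laufer e b Z Z ->
  Z (v 0%N) = Num.ceil ((continuant s.-1 (fun j => b (v j.+1)) * Z n + ocoef Z n')%:~R /
                        (continuant s (fun j => b (v j)))%:~R : rat).
Proof.
move=> [adm minimal]; have [s_gt0 head_gt0 tail_ge2] := chain_weights.
have s_pred : s.-1.+1 = s := prednK s_gt0.
have tail_ge2' j : (j < s.-1)%N -> 2 <= b (v j.+1) by move=> j_lt; apply: tail_ge2; lia.
have end_coef : chain_coefs Z s.+1 = ocoef Z n' by rewrite /chain_coefs /= ltnn.
apply/eqP; rewrite eq_le; apply/andP; split.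
  have [y [y_ineqs y0 y_end y1]] :=
    chain_ineqs_sharp (bs := fun j => b (v j)) (Z n) (ocoef Z n') head_gt0 tail_ge2'.
  rewrite s_pred in y_ineqs y_end y1; rewrite -end_coef in y_end.
  have := minimal _ (admissible_chain_replace adm y_ineqs y0 y_end) (v 0%N).
  by rewrite chain_replace_vertex // y1.
have alpha_gt0 := continuant_head_gt0 (bs := fun j => b (v j)) head_gt0 tail_ge2'.
rewrite s_pred in alpha_gt0; rewrite ceil_frac_le // [leRHS]mulrC.
have ineqs : chain_ineqs s.-1.+1 (fun j => b (v j)) (chain_coefs Z).
  by rewrite s_pred; exact: admissible_chain_ineqs adm.
have := chain_ineqs_lower tail_ge2' ineqs.
by rewrite s_pred end_coef /chain_coefs /= s_gt0.
Qed.

End Chain.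

Theorem mainTheorem6 (V : finType) (e : rel V) (b : V -> int)
    (n : V) (n' : option V) (s : nat) (v : nat -> V) (Z : V -> int) :
  is_tree e -> neg_definite e b -> is_node e n ->
  chain_hyp e b n n' s v ->
  is_laufer e b Z Z ->
  let alpha := chain_det e b s v in
  let beta := chain_det e b s.-1 (fun j => v j.+1) in
  let mn' := if n' is Some n'' then Z n'' else 0 in
  Z (v 0%N) = Num.ceil ((beta * Z n + mn')%:~R / alpha%:~R : rat).
Proof.
move=> [[e_sym e_irr] _] _ node_n chain laufer alpha beta mn'.
have -> : alpha = continuant s (fun j => b (v j)) :=
  chain_det_continuant e_sym node_n chain (m := 0) (k := s) (leqnn s).
have -> : beta = continuant s.-1 (fun j => b (v j.+1)).
  by apply: (chain_det_continuant e_sym node_n chain (m := 1)); case: chain; lia.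
exact: (laufer_fixed_chain_start e_sym e_irr node_n chain laufer).
Qed.
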